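(* Consider $M+1$ base stations indexed $i\in\{0,1,\dots,M\}$ and a finite set $\mathcal{N}$ of users. For each base station $i$ and user $j$, let $\eta_{i,j}\in[0,1)$ be the SINR of user $j$ with respect to base station $i$, and let $B>0$ be the bandwidth. An assignment is a family $(U_0,\dots,U_M)$ of pairwise disjoint subsets of $\mathcal{N}$ ($U_i$ is the set of users served by base station $i$, $N_i=|U_i|$). Its total network capacity is $$C_{tot}(U_0,\dots,U_M)=\sum_{i:\,N_i>0}\frac{B}{N_i}\sum_{j\in U_i}\log_2\!\left(\frac{1}{1-\eta_{i,j}}\right),$$ and let $C_{NC}=\max C_{tot}(U_0,\dots,U_M)$, the maximum over all assignments (the network-capacity-maximizing scheme). Fix thresholds $\lambda_1<\lambda_2<\dots<\lambda_q$ and define the level $L_{i,j}=0$ if $\eta_{i,j}<\lambda_1$, $L_{i,j}=l$ if $\lambda_l\le\eta_{i,j}<\lambda_{l+1}$ for $l\in\{1,\dots,q-1\}$, and $L_{i,j}=q$ if $\eta_{i,j}\ge\lambda_q$. For an assignment, put $U_{i,l}=\{j\in U_i: L_{i,j}=l\}$, $N_{i,l}=|U_{i,l}|$, and let $\overline{\eta}_{i,l}$ be the arithmetic mean of $\{\eta_{i,j}: j\in U_{i,l}\}$ when $N_{i,l}>0$. Define the grouped capacity $$C_{UC}(U_0,\dots,U_M)=\sum_{i:\,N_i>0}B\sum_{l:\,N_{i,l}>0}\frac{N_{i,l}}{N_i}\log_2\!\left(\frac{1}{1-\overline{\eta}_{i,l}}\right).$$ Then for every assignment $(U_0,\dots,U_M)$,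 $C_{UC}(U_0,\dots,U_M)\le C_{NC}$; that is, $C_{NC}$ is an upper bound of $C_{UC}$.
   Context: Setting: downlink femtocell network with one macrocell base station (index $0$) and $M$ femtocell base stations; each user connects to at most one base station, and the bandwidth $B$ of a base station is divided equally among its $N_i$ served users, so a user $j$ served by station $i$ has capacity $\frac{B}{N_i}\log_2\frac{1}{1-\eta_{i,j}}$, where $\eta_{i,j}=|h_{i,j}|^2P_i/(\sigma^2+\sum_{l=0}^M|h_{l,j}|^2P_l)$ lies in $[0,1)$. $C_{UC}$ is the capacity of the proposed user-classification scheme, in which each user's SINR is replaced by the average SINR of its level group at its base station. *)

From HB Require Import structures.
From mathcomp Require Import all_boot all_order all_algebra.
From mathcomp Require Import reals exp.
Set Implicit Arguments. Unset Strict Implicit. Unset Printing Implicit Defensive.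
Import Order.TTheory GRing.Theory Num.Theory.
Local Open Scope ring_scope.

Definition log2 {R : realType} (x : R) : R := ln x / ln 2.

Definition capf {R : realType} (eta : R) : R := log2 (1 / (1 - eta)).

Definition is_assignment (M : nat) (N : finType) (U : 'I_M.+1 -> {set N}) : Prop :=
  forall i k : 'I_M.+1, i != k -> [disjoint U i & U k].

Definition Ctot {R : realType} (M : nat) (N : finType) (B : R)
    (eta : 'I_M.+1 -> N -> R) (U : 'I_M.+1 -> {set N}) : R :=
  \sum_(i < M.+1 | (0 < #|U i|)%N)
     B / (#|U i|)%:R * \sum_(j in U i) capf (eta i j).

(* C_NC: maximum of C_tot over all assignments (a finite set; the empty
   assignment, of capacity 0, is always one of them) *)
Definition CNC {R : realType} (M : nat) (N : finType) (B : R)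
    (eta : 'I_M.+1 -> N -> R) : R :=
  \big[Num.max/0]_(V : {ffun 'I_M.+1 -> {set N}} |
        [forall i, forall k, (i != k) ==> [disjoint V i & V k]])
     Ctot B eta V.

Definition level_cond {R : realType} (q : nat) (lam : nat -> R) (x : R) (l : nat) : bool :=
  [|| (l == 0%N) && (x < lam 1%N),
      [&& (1 <= l)%N, (l < q)%N, lam l <= x & x < lam l.+1]
    | (l == q) && (lam q <= x)].

Definition level {R : realType} (q : nat) (lam : nat -> R) (x : R) : nat :=
  odflt 0%N (omap (@nat_of_ord q.+1) [pick l : 'I_q.+1 | level_cond q lam x l]).

Definition Ugroup {R : realType} (M : nat) (N : finType) (q : nat) (lam : nat -> R)
    (eta : 'I_M.+1 -> N -> R) (U : 'I_M.+1 -> {set N}) (i : 'I_M.+1) (l : nat)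
    : {set N} :=
  [set j in U i | level q lam (eta i j) == l].

Definition etabar {R : realType} (M : nat) (N : finType) (q : nat) (lam : nat -> R)
    (eta : 'I_M.+1 -> N -> R) (U : 'I_M.+1 -> {set N}) (i : 'I_M.+1) (l : nat) : R :=
  (\sum_(j in Ugroup q lam eta U i l) eta i j) / (#|Ugroup q lam eta U i l|)%:R.

Definition CUC {R : realType} (M : nat) (N : finType) (B : R) (q : nat) (lam : nat -> R)
    (eta : 'I_M.+1 -> N -> R) (U : 'I_M.+1 -> {set N}) : R :=
  \sum_(i < M.+1 | (0 < #|U i|)%N)
     B * \sum_(l < q.+1 | (0 < #|Ugroup q lam eta U i l|)%N)
        ((#|Ugroup q lam eta U i l|)%:R / (#|U i|)%:R)
          * capf (etabar q lam eta U i l).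

(* The per-user factor capf x = -log2 (1 - x) is convex on [0, 1), so by
   Jensen's inequality replacing the SINRs of a level group by their mean can
   only decrease the sum of the factors over the group.  Since the groups of a
   base station partition its users, C_UC of an assignment is at most C_tot of
   the same assignment, which is at most the maximum C_NC. *)
From HB Require Import structures.
From mathcomp Require Import all_boot all_order all_algebra.
From mathcomp Require Import reals exp.
From mathcomp Require Import lra.
Import Order.TTheory GRing.Theory Num.Theory.
Local Open Scope ring_scope.

Section CapacityFactor.
Variable R : realType.
Implicit Types x : R.

Lemma ln_le_subr1 x : 0 < x -> ln x <= x - 1.
Proof.
move=> x_gt0; have := @le_ln1Dx R (x - 1).
by rewrite [1 + _]addrC subrK; apply; lra.
Qed.

Lemma capfE x : x < 1 -> capf x = - ln (1 - x) / ln 2.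
Proof. by move=> x_lt1; rewrite /capf /log2 div1r lnV // posrE; lra. Qed.

Variable I : finType.
Implicit Types S : {set I}.

Lemma sumr_gt0 S (y : I -> R) : (0 < #|S|)%N -> {in S, forall j, 0 < y j} ->
  0 < \sum_(j in S) y j.
Proof.
case/card_gt0P=> j0 j0S y_gt0; rewrite (bigD1 j0) //= ltr_pwDl ?y_gt0 //.
by apply: sumr_ge0 => j /andP[jS _]; exact/ltW/y_gt0.
Qed.

(* Jensen for the concave ln, via ln t <= t - 1 at t = y j / mean. *)
Lemma sum_ln_le_card_ln_mean S (y : I -> R) : (0 < #|S|)%N -> {in S, forall j, 0 < y j} ->
  \sum_(j in S) ln (y j) <= #|S|%:R * ln ((\sum_(j in S) y j) / #|S|%:R).
Proof.
move=> S_gt0 y_gt0; set n : R := #|S|%:R; set a := (\sum_(j in S) y j) / n.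
have n_gt0 : 0 < n by rewrite ltr0n.
have a_gt0 : 0 < a by rewrite divr_gt0 ?sumr_gt0.
rewrite -subr_le0 /n mulr_natl -sumr_const -sumrB.
apply: le_trans (_ : \sum_(j in S) (y j / a - 1) <= 0).
  apply: ler_sum => j jS; rewrite -ln_div ?posrE ?y_gt0 //.
  by apply/ln_le_subr1/divr_gt0; rewrite ?y_gt0.
rewrite sumrB -mulr_suml sumr_const -/n.
by rewrite /a invf_div mulrCA mulfV ?mulr1 ?subrr // gt_eqF ?sumr_gt0.
Qed.

Lemma capf_mean_le S (x : I -> R) : (0 < #|S|)%N -> {in S, forall j, 0 <= x j < 1} ->
  #|S|%:R * capf ((\sum_(j in S) x j) / #|S|%:R) <= \sum_(j in S) capf (x j).
Proof.
move=> S_gt0 x01; set n : R := #|S|%:R.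
have n_neq0 : n != 0 by rewrite pnatr_eq0 -lt0n.
have mean1 : 1 - (\sum_(j in S) x j) / n = (\sum_(j in S) (1 - x j)) / n.
  by rewrite sumrB sumr_const mulrBl mulfV.
have x_lt1 : {in S, forall j, 0 < 1 - x j}.
  by move=> j /x01/andP[_]; rewrite subr_gt0.
rewrite capfE; last first.
  by rewrite -subr_gt0 mean1 divr_gt0 ?sumr_gt0 ?ltr0n.
rewrite [leRHS](eq_bigr (fun j => - ln (1 - x j) / ln 2)); last first.
  by move=> j /x01/andP[_ /capfE].
rewrite -mulr_suml mulrA ler_wpM2r ?invr_ge0 ?ln_ge0 ?ler1n //.
by rewrite mean1 sumrN mulrN lerN2 sum_ln_le_card_ln_mean.
Qed.

End CapacityFactor.

Section Grouping.
Variables (R : realType) (M : nat) (N : finType) (q : nat) (lam : nat -> R).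
Variables (eta : 'I_M.+1 -> N -> R) (U : 'I_M.+1 -> {set N}).

Lemma level_le x : (level q lam x <= q)%N.
Proof. by rewrite /level; case: pickP => [l _|_] //=; rewrite -ltnS. Qed.

Lemma sum_Ugroup i (F : N -> R) :
  \sum_(l < q.+1) \sum_(j in Ugroup q lam eta U i l) F j = \sum_(j in U i) F j.
Proof.
rewrite (partition_big (fun j => inord (level q lam (eta i j)) : 'I_q.+1) predT) //=.
apply: eq_bigr => l _; apply: eq_bigl => j; rewrite inE; congr (_ && _).
by rewrite -val_eqE /= inordK // ltnS level_le.
Qed.

Lemma CUC_le_Ctot B : 0 <= B -> (forall i j, 0 <= eta i j < 1) ->
  CUC B q lam eta U <= Ctot B eta U.
Proof.
move=> B_ge0 eta01; apply: ler_sum => i Ui_gt0; rewrite -mulrA ler_wpM2l //.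
set n : R := #|U i|%:R.
have n_inv_ge0 : 0 <= n^-1 by rewrite invr_ge0 ler0n.
rewrite [leRHS]mulrC -sum_Ugroup mulr_suml; set G := Ugroup q lam eta U i.
rewrite -[leRHS](big_rmcond (fun l : 'I_q.+1 => (0 < #|G l|)%N)); last first.
  by move=> l; rewrite -leqNgt leqn0 => /eqP/cards0_eq ->; rewrite big_set0 mul0r.
apply: ler_sum => l Gl_gt0; rewrite mulrAC ler_wpM2r //.
by apply: capf_mean_le => // j _; exact: eta01.
Qed.

End Grouping.

Lemma Ctot_le_CNC {R : realType} {M : nat} {N : finType} (B : R)
    (eta : 'I_M.+1 -> N -> R) {U : 'I_M.+1 -> {set N}} :
  is_assignment U -> Ctot B eta U <= CNC B eta.
Proof.
move=> U_asg; have -> : Ctot B eta U = Ctot B eta [ffun i => U i].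
  by apply: eq_big => i; rewrite ffunE.
apply: le_bigmax_cond; apply/forallP => i; apply/forallP => k; apply/implyP.
by rewrite !ffunE; exact: U_asg.
Qed.

Theorem lemma1 (R : realType) (M : nat) (N : finType) (B : R)
    (eta : 'I_M.+1 -> N -> R) (q : nat) (lam : nat -> R)
    (U : 'I_M.+1 -> {set N}) :
  0 < B ->
  (forall i j, 0 <= eta i j /\ eta i j < 1) ->
  (0 < q)%N ->
  (forall l, (1 <= l)%N -> (l < q)%N -> lam l < lam l.+1) ->
  is_assignment U ->
  CUC B q lam eta U <= CNC B eta.
Proof.
move=> B_gt0 eta01 _ _ U_asg.
apply: (@le_trans _ _ (Ctot B eta U)); last exact: Ctot_le_CNC.
by apply: CUC_le_Ctot; [exact: ltW | move=> i j; case: (eta01 i j) => -> ->].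
Qed.
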